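(* Assume (A1), (A2) and (A4). Let $\theta'\in(\underline{\theta},\overline{\theta}]$ and let $F_{\theta'}$ be the distribution $F$ conditional on $\theta\in[\underline{\theta},\theta']$. Suppose each type $\theta$ values the good at $\overline{u}(\theta)=v(x^e(\theta))+\theta x^e(\theta)$ (i.e., consumes its efficient quantity $x^e(\theta)$), and the seller charges a single uniform price $p$, selling to exactly the types with $\overline{u}(\theta)\ge p$. Then the revenue $p\cdot\Pr_{F_{\theta'}}(\overline{u}(\theta)\ge p)$ is maximized at $p=\overline{u}(\underline{\theta})$.
   Context: Fix $\underline{\theta}<\overline{\theta}$ and $\overline{x}>0$. The buyer's type $\theta\in[\underline{\theta},\overline{\theta}]$ has CDF $F$ with density $f$. (A1): $v:[0,\overline{x}]\to\mathbb{R}$ strictly concave, continuously differentiable, $v(0)=0$. $x^e(\theta)$ is the unique maximizer of $v(x')+\theta x'$ over $x'\in[0,\overline{x}]$. (A2): $0<m\le f\le M$ for constants $m,M$, and $\theta-\frac{1-F(\theta)}{f(\theta)}$ strictly increasing. (A4): $v(x^e(\theta))+\big(\theta-\frac{1-F(\theta)}{f(\theta)}\big)x^e(\theta)\ge0$ for all $\theta$. *)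

From HB Require Import structures.
From mathcomp Require Import all_boot all_order all_algebra.
From mathcomp Require Import all_classical all_reals all_analysis.
Set Implicit Arguments. Unset Strict Implicit. Unset Printing Implicit Defensive.
Import Order.TTheory GRing.Theory Num.Theory.
Import numFieldNormedType.Exports.
Local Open Scope classical_set_scope.
Local Open Scope ring_scope.

Definition dmass {R : realType} (f : R -> R) (A : set R) : R :=
  Rintegral (@lebesgue_measure R) A f.

Definition dens_cdf {R : realType} (tl : R) (f : R -> R) (t : R) : R :=
  dmass f `[tl, t].

Definition strictly_concave_on {R : realType} (xbar : R) (v : R -> R) : Prop :=
  forall a b t : R, 0 <= a <= xbar -> 0 <= b <= xbar -> a != b -> 0 < t < 1 ->
    t * v a + (1 - t) * v b < v (t * a + (1 - t) * b).

Definition C1_on {R : realType} (xbar : R) (v : R -> R) : Prop :=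
  {within `[0, xbar], continuous v} /\
  exists dv : R -> R, {within `[0, xbar], continuous dv} /\
    forall x : R, 0 < x < xbar -> is_derive x 1 v (dv x).

Definition is_unique_maximizer {R : realType} (xbar : R) (v : R -> R) (t x : R) : Prop :=
  0 <= x <= xbar /\
  forall x' : R, 0 <= x' <= xbar -> x' != x -> v x' + t * x' < v x + t * x.

Definition virt {R : realType} (tl : R) (f : R -> R) (t : R) : R :=
  t - (1 - dens_cdf tl f t) / f t.

Definition ubar {R : realType} (v xe : R -> R) (t : R) : R :=
  v (xe t) + t * xe t.

Definition revenue {R : realType} (tl t' : R) (f v xe : R -> R) (p : R) : R :=
  p * (dmass f ([set t | tl <= t <= t'] `&` [set t | p <= ubar v xe t])
       / dens_cdf tl f t').

From HB Require Import structures.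
From mathcomp Require Import all_boot all_order all_algebra.
From mathcomp Require Import all_classical all_reals all_analysis.
From mathcomp Require Import ring lra.
Import Order.TTheory GRing.Theory Num.Theory.
Import numFieldNormedType.Exports.
Local Open Scope classical_set_scope.
Local Open Scope ring_scope.

(* The value ubar t = max_x (v x + t x) satisfies
   (t - s) xe s <= ubar t - ubar s <= (t - s) xe t, so it is nondecreasing and
   xbar-Lipschitz. Hence a price p <= ubar t' sells exactly to an interval [c, t'] with
   p <= ubar c, and its revenue is at most G c / F t', where
   G s = ubar s (F t' - F s); the price ubar tl earns G tl / F t'. It remains to see
   that G is nonincreasing on [tl, t']: formally
   G' = xe (F t' - F) - ubar f <= xe (1 - F) - ubar f <= 0 by (A4). As f is only
   bounded and measurable, this is done with the discrete inequality
   G a - G b >= - (b - a) (xe b - xe a) - xbar M (b - a)^2, summed over fine partitions. *)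

Lemma le0_of_le_divSn (R : archiRealFieldType) (x C : R) :
  (forall n : nat, x <= C / n.+1%:R) -> x <= 0.
Proof.
move=> x_le; rewrite leNgt; apply/negP => x_gt0.
pose n := Num.Def.archi_bound (`|C| / x).
have n_gt0 : (0 : R) < n.+1%:R by rewrite ltr0n.
have : `|C| / x < n.+1%:R.
  apply: lt_le_trans (archi_boundP _) _; first by rewrite divr_ge0 // ltW.
  by rewrite ler_nat.
rewrite ltr_pdivrMr // => Cn.
have := x_le n; rewrite ler_pdivlMr //.
have := ler_norm C; lra.
Qed.

Section StepBound.
Set Implicit Arguments. Unset Strict Implicit.
Variables (R : archiRealFieldType) (G h : R -> R) (lo hi K : R).
Hypothesis G_step : forall a b, lo <= a -> a <= b -> b <= hi ->
  - ((b - a) * (h b - h a)) - K * (b - a) ^+ 2 <= G a - G b.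

Lemma step_bound_chain a d n : lo <= a -> 0 <= d -> a + n%:R * d <= hi ->
  - (d * (h (a + n%:R * d) - h a)) - n%:R * (K * d ^+ 2) <= G a - G (a + n%:R * d).
Proof.
move=> lo_a d_ge0; elim: n => [|n IH] an_hi.
  by rewrite mul0r addr0 !subrr mulr0 mul0r; lra.
have nS : a + n.+1%:R * d = (a + n%:R * d) + d by rewrite -natr1; ring.
have an_le : a + n%:R * d <= a + n.+1%:R * d by rewrite nS lerDl.
have lo_an : lo <= a + n%:R * d by rewrite (le_trans lo_a) // lerDl mulr_ge0.
have := G_step lo_an an_le an_hi; have := IH (le_trans an_le an_hi).
rewrite nS addrAC subrr add0r -natr1.
set x := a + n%:R * d.
have : (n%:R + 1) * (K * d ^+ 2) = n%:R * (K * d ^+ 2) + K * d ^+ 2 by ring.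
have : d * (h (x + d) - h a) = d * (h x - h a) + d * (h (x + d) - h x) by ring.
lra.
Qed.

(* Over a partition of [a, b] into n equal pieces of length d, the first-order
   terms telescope to d (h b - h a) and the second-order ones add up to n K d^2:
   both are O(1/n). *)
Lemma nonincreasing_of_step_bound a b : lo <= a -> a <= b -> b <= hi -> G b <= G a.
Proof.
move=> lo_a ab b_hi; rewrite -subr_le0.
apply: (@le0_of_le_divSn _ _ ((b - a) * (h b - h a) + K * (b - a) ^+ 2)) => n.
have n_gt0 : (0 : R) < n.+1%:R by rewrite ltr0n.
pose d := (b - a) / n.+1%:R.
have a_nd : a + n.+1%:R * d = b by rewrite /d mulrC divfK ?lt0r_neq0 //; ring.
have d_ge0 : 0 <= d by rewrite divr_ge0 ?subr_ge0 // ltW.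
have := step_bound_chain (n := n.+1) lo_a d_ge0; rewrite a_nd => /(_ b_hi).
have -> : ((b - a) * (h b - h a) + K * (b - a) ^+ 2) / n.+1%:R =
          d * (h b - h a) + n.+1%:R * (K * d ^+ 2).
  by rewrite /d; field; rewrite lt0r_neq0.
lra.
Qed.
End StepBound.

Lemma superlevel_itv (R : realType) (u : R -> R) (lo hi L p : R) :
  0 < L -> lo <= hi ->
  (forall s t, lo <= s -> s <= t -> t <= hi -> u s <= u t) ->
  (forall s t, lo <= s -> s <= t -> t <= hi -> u t - u s <= L * (t - s)) ->
  p <= u hi ->
  exists2 c, lo <= c <= hi /\ p <= u c &
    [set t | lo <= t <= hi] `&` [set t | p <= u t] = `[c, hi]%classic.
Proof.
move=> L_gt0 lo_hi u_mono u_lip p_le.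
set S := _ `&` _.
have S_hi : S hi by split => //=; rewrite lo_hi lexx.
have S_lb : has_lbound S by exists lo => t [/andP[]].
have S_inf : has_inf S by split => //; exists hi.
have inf_le := ge_inf S_lb.
have lo_c : lo <= inf S by apply: lb_le_inf; [exists hi | move=> t [/andP[]]].
have c_hi : inf S <= hi := inf_le _ S_hi.
have p_le_c : p <= u (inf S).
  apply/ler_addgt0Pr => e e_gt0.
  have [s [/= /andP[lo_s s_hi] p_le_s] s_lt] := inf_adherent (divr_gt0 e_gt0 L_gt0) S_inf.
  have c_s : inf S <= s by apply: inf_le; split => //=; rewrite lo_s.
  have := u_lip _ _ lo_c c_s s_hi.
  have : L * (s - inf S) <= e by rewrite mulrC -ler_pdivlMr //; lra.
  lra.
exists (inf S); first by rewrite lo_c c_hi.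
apply/seteqP; split => t.
  by move=> St; rewrite /= in_itv /= inf_le //; case: St => /andP[].
rewrite /= in_itv /= => /andP[c_t t_hi]; split; first by rewrite /= (le_trans lo_c c_t).
exact: le_trans p_le_c (u_mono _ _ lo_c c_t t_hi).
Qed.

Lemma unique_maximizer_le {R : realType} {xbar t x x' : R} {v : R -> R} :
  is_unique_maximizer xbar v t x -> 0 <= x' <= xbar -> v x' + t * x' <= v x + t * x.
Proof.
move=> [_ x_max] x'_in; have [-> // | x'x] := eqVneq x' x.
exact/ltW/x_max.
Qed.

Section Envelope.
Set Implicit Arguments. Unset Strict Implicit.
Variables (R : realType) (xbar tl th : R) (v xe : R -> R).

Hypothesis xe_max : forall t, tl <= t <= th -> is_unique_maximizer xbar v t (xe t).
Local Notation u := (ubar v xe).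

Lemma xe_bounds t : tl <= t <= th -> 0 <= xe t <= xbar.
Proof. by move=> /xe_max[]. Qed.

Lemma ubar_envelope s t : tl <= s <= th -> tl <= t <= th -> u s + (t - s) * xe s <= u t.
Proof.
move=> s_in t_in.
have := unique_maximizer_le (xe_max t_in) (xe_bounds s_in).
rewrite /ubar; lra.
Qed.

Lemma ubar_ge0 t : v 0 = 0 -> tl <= t <= th -> 0 <= u t.
Proof.
move=> v0 t_in; have /andP[xt_ge0 xt_le] := xe_bounds t_in.
have := unique_maximizer_le (x' := 0) (xe_max t_in).
by rewrite v0 mulr0 addr0 lexx (le_trans xt_ge0 xt_le); apply.
Qed.

Lemma ubar_nondecreasing s t : tl <= s -> s <= t -> t <= th -> u s <= u t.
Proof.
move=> tl_s st t_th.
have s_in : tl <= s <= th by rewrite tl_s (le_trans st).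
have t_in : tl <= t <= th by rewrite t_th (le_trans tl_s).
have := ubar_envelope s_in t_in; have /andP[xs_ge0 _] := xe_bounds s_in.
have : 0 <= (t - s) * xe s by rewrite mulr_ge0 ?subr_ge0.
lra.
Qed.

Lemma xe_nondecreasing s t : tl <= s -> s <= t -> t <= th -> xe s <= xe t.
Proof.
move=> tl_s st t_th.
have s_in : tl <= s <= th by rewrite tl_s (le_trans st).
have t_in : tl <= t <= th by rewrite t_th (le_trans tl_s).
have [<- // | ts] := eqVneq t s.
have st' : 0 < t - s by rewrite subr_gt0 lt_neqAle eq_sym ts.
rewrite -(ler_pM2l st').
have := ubar_envelope s_in t_in; have := ubar_envelope t_in s_in; lra.
Qed.

Lemma ubar_lipschitz s t : tl <= s -> s <= t -> t <= th -> u t - u s <= xbar * (t - s).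
Proof.
move=> tl_s st t_th.
have s_in : tl <= s <= th by rewrite tl_s (le_trans st).
have t_in : tl <= t <= th by rewrite t_th (le_trans tl_s).
have := ubar_envelope t_in s_in; have /andP[_ xt_le] := xe_bounds t_in.
have : (t - s) * xe t <= (t - s) * xbar by rewrite ler_wpM2l ?subr_ge0.
lra.
Qed.

End Envelope.

Lemma bounded_integrable_itv (R : realType) (a b B : R) (A : set R) (g : R -> R) :
  measurable A -> A `<=` `[a, b] -> measurable_fun A g -> (forall x, A x -> `|g x| <= B) ->
  lebesgue_measure.-integrable A (EFin \o g).
Proof.
move=> mA Aab mg gB; apply: measurable_bounded_integrable => //.
  have Aab_le : (lebesgue_measure A <= lebesgue_measure `[a, b])%E.
    by apply: le_measure => //; rewrite inE.
  apply: le_lt_trans Aab_le _.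
  by rewrite lebesgue_measure_itv; case: ifP => _ //=; rewrite ltry.
exists B; split; first exact: num_real.
by move=> y By x /gB/le_trans; apply; rewrite ltW.
Qed.

Lemma dens_cdf_self (R : realType) (tl : R) (f : R -> R) : dens_cdf tl f tl = 0.
Proof. by rewrite /dens_cdf /dmass set_itv1 Rintegral_set1. Qed.

Section Density.
Set Implicit Arguments. Unset Strict Implicit.
Variables (R : realType) (tl th m M : R) (f : R -> R).
Hypotheses (f_meas : measurable_fun [set t | tl <= t <= th] f)
  (m_gt0 : 0 < m) (f_bounds : forall t, tl <= t <= th -> m <= f t <= M).
Local Notation F := (dens_cdf tl f).
Local Notation mu := (@lebesgue_measure R).

Lemma dens_gt0 t : tl <= t <= th -> 0 < f t.
Proof. by move=> /f_bounds/andP[/(lt_le_trans m_gt0)]. Qed.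

Lemma dens_integrable A : measurable A -> A `<=` `[tl, th] -> mu.-integrable A (EFin \o f).
Proof.
move=> mA Ath; apply: (bounded_integrable_itv (B := M) mA Ath).
  by apply: measurable_funS Ath f_meas; exact: measurable_itv.
move=> x /Ath; rewrite /= in_itv /= => /[dup] /dens_gt0 /ltW f_ge0.
by move=> /f_bounds/andP[_]; rewrite ger0_norm.
Qed.

Lemma dens_cdfB a b : tl <= a -> a <= b -> b <= th ->
  F b - F a = \int[mu]_(x in `]a, b]) f x.
Proof.
move=> tl_a ab b_th; apply: Rintegral_itvB; rewrite ?bnd_simp //.
apply: dens_integrable => // x /=; rewrite !in_itv /= => /andP[-> xb].
exact: le_trans xb b_th.
Qed.

Lemma dens_cdfB_ge c K a b : tl <= a -> a <= b -> b <= th ->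
  (forall t, a < t <= b -> c <= K * f t) -> c * (b - a) <= K * (F b - F a).
Proof.
move=> tl_a ab b_th cKf.
have sub_ab : `]a, b] `<=` `[tl, th].
  move=> x /=; rewrite !in_itv /= => /andP[ax xb].
  by rewrite (le_trans tl_a (ltW ax)) (le_trans xb b_th).
have f_int := dens_integrable (measurable_itv _) sub_ab.
have -> : c * (b - a) = \int[mu]_(x in `]a, b]) c.
  have := lebesgue_measure_itv `]a, b]; rewrite Rintegral_cst //= lte_fin.
  case: ltP => [_ -> //| ba ->].
  have -> : b = a by apply/le_anti; rewrite ba ab.
  by rewrite subrr !mulr0.
rewrite dens_cdfB // -RintegralZl //; apply: le_Rintegral => //.
- apply: (bounded_integrable_itv (B := `|c|) _ sub_ab) => //.
- apply: (bounded_integrable_itv (B := `|K| * M) _ sub_ab) => //.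
    apply: (measurable_realfun.measurable_funM (f := cst K)) => //.
    by apply: measurable_funS sub_ab f_meas; exact: measurable_itv.
  move=> x /sub_ab; rewrite /= in_itv /= => x_in.
  have /andP[_ fM] := f_bounds x_in.
  by rewrite normrM ler_wpM2l // ger0_norm // ltW // dens_gt0.
Qed.

Lemma dens_cdf_nondecreasing a b : tl <= a -> a <= b -> b <= th -> F a <= F b.
Proof.
move=> tl_a ab b_th; rewrite -subr_ge0 -[_ - _]mul1r -(mul0r (b - a)).
apply: dens_cdfB_ge => // t /andP[a_t tb]; rewrite mul1r ltW // dens_gt0 //.
by rewrite (le_trans tl_a (ltW a_t)) (le_trans tb b_th).
Qed.

Lemma dens_cdf_gt0 t : tl < t -> t <= th -> 0 < F t.
Proof.
move=> tl_t t_th.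
have m_le_f s : tl < s <= t -> m <= 1 * f s.
  move=> /andP[tl_s st]; rewrite mul1r.
  have s_in : tl <= s <= th by rewrite (ltW tl_s) (le_trans st t_th).
  by have /andP[] := f_bounds s_in.
have := dens_cdfB_ge (lexx tl) (ltW tl_t) t_th m_le_f.
rewrite dens_cdf_self subr0 mul1r; apply: lt_le_trans.
by rewrite mulr_gt0 ?subr_gt0.
Qed.

Lemma dmass_itv c t : tl <= c -> c <= t -> t <= th -> dmass f `[c, t] = F t - F c.
Proof.
move=> tl_c ct t_th; rewrite dens_cdfB // /dmass Rintegral_itv_obnd_cbnd //.
apply: dens_integrable => // x /=; rewrite !in_itv /= => /andP[cx xt].
by rewrite (le_trans tl_c (ltW cx)) (le_trans xt t_th).
Qed.

Lemma revenue_itv t' (v xe : R -> R) p c : tl <= c -> c <= t' -> t' <= th ->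
  [set t | tl <= t <= t'] `&` [set t | p <= ubar v xe t] = `[c, t']%classic ->
  revenue tl t' f v xe p = p * ((F t' - F c) / F t').
Proof. by move=> tl_c ct' t'_th S_eq; rewrite /revenue S_eq dmass_itv. Qed.

End Density.

Lemma ubar_dens_ge_of_virt (R : realType) (tl t : R) (f v xe : R -> R) :
  0 < f t -> 0 <= v (xe t) + virt tl f t * xe t ->
  (1 - dens_cdf tl f t) * xe t <= ubar v xe t * f t.
Proof.
move=> f_gt0 surplus_ge0; rewrite -subr_ge0.
have -> : ubar v xe t * f t - (1 - dens_cdf tl f t) * xe t =
          f t * (v (xe t) + virt tl f t * xe t).
  by rewrite /ubar /virt; field; exact: lt0r_neq0.
exact: mulr_ge0 (ltW f_gt0) surplus_ge0.
Qed.

(* [F t'] times the revenue of the price [ubar s] when it sells to the types in [[s, t']]. *)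
Definition cutoff_revenue (R : realType) (tl t' : R) (f v xe : R -> R) (s : R) : R :=
  ubar v xe s * (dens_cdf tl f t' - dens_cdf tl f s).

Section CutoffRevenue.
Set Implicit Arguments. Unset Strict Implicit.
Variables (R : realType) (tl th xbar m M t' : R) (f v xe : R -> R).
Hypotheses (xe_max : forall t, tl <= t <= th -> is_unique_maximizer xbar v t (xe t))
  (f_meas : measurable_fun [set t | tl <= t <= th] f) (F_th : dens_cdf tl f th = 1)
  (m_gt0 : 0 < m) (f_bounds : forall t, tl <= t <= th -> m <= f t <= M)
  (virt_surplus_ge0 : forall t, tl <= t <= th -> 0 <= v (xe t) + virt tl f t * xe t)
  (t'_le_th : t' <= th).
Local Notation u := (ubar v xe).
Local Notation F := (dens_cdf tl f).
Local Notation G := (cutoff_revenue tl t' f v xe).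

Let F_nondecreasing := dens_cdf_nondecreasing f_meas m_gt0 f_bounds.

Lemma ubar_mass_ge a b : tl <= a -> a <= b -> b <= t' ->
  ((F t' - F b) * xe a - xbar * M * (b - a)) * (b - a) <= u a * (F b - F a).
Proof.
move=> tl_a ab bt'; have b_th := le_trans bt' t'_le_th.
have a_in : tl <= a <= th by rewrite tl_a (le_trans ab b_th).
apply: (dens_cdfB_ge f_meas m_gt0 f_bounds) => // t /andP[a_t tb].
have tl_t := le_trans tl_a (ltW a_t).
have t_in : tl <= t <= th by rewrite tl_t (le_trans tb b_th).
have f_gt0 := dens_gt0 m_gt0 f_bounds t_in.
have /andP[_ fM] := f_bounds t_in.
have /andP[xt_ge0 xt_le] := xe_bounds xe_max t_in.
have /andP[xa_ge0 _] := xe_bounds xe_max a_in.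
have Ft_le := F_nondecreasing tl_t tb b_th.
have Ft'_le1 : F t' <= 1 by rewrite -F_th F_nondecreasing // (le_trans tl_a (le_trans ab bt')).
have Fb_le : F b <= F t' by rewrite F_nondecreasing // (le_trans tl_a ab).
have hazard : (F t' - F b) * xe a <= (1 - F t) * xe t.
  apply: ler_pM; rewrite ?subr_ge0 //; first lra.
  exact: (xe_nondecreasing xe_max tl_a (ltW a_t) (le_trans tb b_th)).
have env : u t <= u a + (t - a) * xe t.
  by have := ubar_envelope xe_max t_in a_in; lra.
have drift : (t - a) * xe t * f t <= (b - a) * xbar * M.
  apply: ler_pM; rewrite ?mulr_ge0 ?subr_ge0 ?(ltW a_t) ?(ltW f_gt0) //.
  by apply: ler_pM; rewrite ?subr_ge0 ?(ltW a_t) //; lra.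
have := ubar_dens_ge_of_virt f_gt0 (virt_surplus_ge0 t_in).
have : u t * f t <= (u a + (t - a) * xe t) * f t by rewrite ler_wpM2r // ltW.
have : (u a + (t - a) * xe t) * f t = u a * f t + (t - a) * xe t * f t by ring.
have : xbar * M * (b - a) = (b - a) * xbar * M by ring.
lra.
Qed.

Lemma cutoff_revenue_step a b : tl <= a -> a <= b -> b <= t' ->
  - ((b - a) * (xe b - xe a)) - xbar * M * (b - a) ^+ 2 <= G a - G b.
Proof.
move=> tl_a ab bt'; have b_th := le_trans bt' t'_le_th.
have a_in : tl <= a <= th by rewrite tl_a (le_trans ab b_th).
have b_in : tl <= b <= th by rewrite (le_trans tl_a ab) b_th.
have Fb_le : F b <= F t' by rewrite F_nondecreasing // (le_trans tl_a ab).
have Fb_ge0 : 0 <= F b by rewrite -(dens_cdf_self tl f) F_nondecreasing // (le_trans tl_a ab).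
have Ft'_le1 : F t' <= 1 by rewrite -F_th F_nondecreasing // (le_trans tl_a (le_trans ab bt')).
have xab : 0 <= (b - a) * (xe b - xe a).
  by rewrite mulr_ge0 ?subr_ge0 // (xe_nondecreasing xe_max tl_a ab b_th).
have gain : (u b - u a) * (F t' - F b) <= (b - a) * xe b * (F t' - F b).
  by rewrite ler_wpM2r ?subr_ge0 //; have := ubar_envelope xe_max b_in a_in; lra.
have loss : (F t' - F b) * ((b - a) * (xe b - xe a)) <= (b - a) * (xe b - xe a).
  by rewrite ler_piMl //; lra.
have -> : G a - G b = u a * (F b - F a) - (u b - u a) * (F t' - F b).
  by rewrite /cutoff_revenue; ring.
have := ubar_mass_ge tl_a ab bt'.
have : (b - a) * xe b * (F t' - F b) =
       (F t' - F b) * ((b - a) * (xe b - xe a)) + (F t' - F b) * xe a * (b - a) by ring.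
have : ((F t' - F b) * xe a - xbar * M * (b - a)) * (b - a) =
       (F t' - F b) * xe a * (b - a) - xbar * M * (b - a) ^+ 2 by ring.
lra.
Qed.

Lemma cutoff_revenue_nonincreasing a b : tl <= a -> a <= b -> b <= t' -> G b <= G a.
Proof. exact: (@nonincreasing_of_step_bound R _ _ _ _ _ cutoff_revenue_step). Qed.

End CutoffRevenue.

Theorem lemma6 (R : realType) (tl th xbar m M : R) (f v xe : R -> R) (t' : R) :
  tl < th -> 0 < xbar ->
  (* (A1) *)
  strictly_concave_on xbar v -> C1_on xbar v -> v 0 = 0 ->
  (forall t, tl <= t <= th -> is_unique_maximizer xbar v t (xe t)) ->
  (* f is a density on [tl, th] with CDF F = dens_cdf tl f *)
  measurable_fun [set t | tl <= t <= th] f ->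
  dens_cdf tl f th = 1 ->
  (* (A2) *)
  0 < m ->
  (forall t, tl <= t <= th -> m <= f t <= M) ->
  (forall s t, tl <= s <= th -> tl <= t <= th -> s < t -> virt tl f s < virt tl f t) ->
  (* (A4) *)
  (forall t, tl <= t <= th -> 0 <= v (xe t) + virt tl f t * xe t) ->
  (* theta' in (tl, th] *)
  tl < t' <= th ->
  forall p : R, revenue tl t' f v xe p <= revenue tl t' f v xe (ubar v xe tl).
Proof.
move=> _ xbar_gt0 _ _ v0 xe_max f_meas F_th m_gt0 f_bounds _ surplus_ge0
  /andP[tl_t' t'_th] p.
have Ft'_gt0 := dens_cdf_gt0 f_meas m_gt0 f_bounds tl_t' t'_th.
have u_mono s t : tl <= s -> s <= t -> t <= t' -> ubar v xe s <= ubar v xe t.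
  by move=> tl_s st tt'; exact: (ubar_nondecreasing xe_max tl_s st (le_trans tt' t'_th)).
have u_lip s t : tl <= s -> s <= t -> t <= t' -> ubar v xe t - ubar v xe s <= xbar * (t - s).
  by move=> tl_s st tt'; exact: (ubar_lipschitz xe_max tl_s st (le_trans tt' t'_th)).
have sell_all :
    [set t | tl <= t <= t'] `&` [set t | ubar v xe tl <= ubar v xe t] = `[tl, t']%classic.
  apply/seteqP; split => t /=; first by case; rewrite in_itv.
  by rewrite in_itv /= => /andP[tl_t tt']; split; [rewrite /= tl_t | apply: u_mono].
rewrite (revenue_itv f_meas m_gt0 f_bounds (lexx tl) (ltW tl_t') t'_th sell_all).
rewrite dens_cdf_self subr0 divff ?mulr1 ?lt0r_neq0 //.
have [p_gt | p_le] := ltP (ubar v xe t') p.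
  have sell_none : [set t | tl <= t <= t'] `&` [set t | p <= ubar v xe t] = set0.
    apply/seteqP; split => t // [/andP[tl_t tt'] /= p_le_t].
    by have := u_mono _ _ tl_t tt' (lexx t'); lra.
  rewrite /revenue sell_none /dmass Rintegral_set0 mul0r mulr0.
  by apply: (ubar_ge0 xe_max v0); rewrite lexx (le_trans (ltW tl_t') t'_th).
have [c [/andP[tl_c ct'] p_le_c] S_eq] :=
  superlevel_itv xbar_gt0 (ltW tl_t') u_mono u_lip p_le.
rewrite (revenue_itv f_meas m_gt0 f_bounds tl_c ct' t'_th S_eq) mulrA ler_pdivrMr //.
have G_le := cutoff_revenue_nonincreasing xe_max f_meas F_th m_gt0 f_bounds surplus_ge0
  t'_th (lexx tl) tl_c ct'.
rewrite /cutoff_revenue dens_cdf_self subr0 in G_le.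
apply: le_trans G_le; rewrite ler_wpM2r // subr_ge0.
exact: (dens_cdf_nondecreasing f_meas m_gt0 f_bounds tl_c ct' t'_th).
Qed.
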